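(* For every prime power $q$, the chromatic number $\chi$ of the Kneser graph of flags of type $\{2,3\}$ of $\mathrm{PG}(6,q)$ satisfies $\chi\le q^4+q^3+q^2+1$.
   Context: Dimensions are projective (planes 2, solids 3). A flag of type $\{2,3\}$ is a pair $(E,S)$ of a plane $E$ and a solid $S$ with $E\subseteq S$; the Kneser graph has these flags as vertices, distinct flags $(E,S),(E',S')$ being adjacent iff $E\cap S'=\emptyset$ and $E'\cap S=\emptyset$. The chromatic number is the least number of independent sets whose union is the whole vertex set. *)

From HB Require Import structures.
From mathcomp Require Import all_boot all_order all_algebra all_field.
Set Implicit Arguments. Unset Strict Implicit. Unset Printing Implicit Defensive.
Import GRing.Theory.
Local Open Scope ring_scope.

(* The projective space PG(n-1, F) is modelled by the vector space F^n = 'rV[F]_n;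
   a projective subspace of projective dimension d is a vector subspace of
   (vector) dimension d+1. *)
Section Kneser.
Variables (F : fieldType) (n : nat).
Local Notation V := 'rV[F]_n.

Definition is_plane (E : {vspace V}) : Prop := \dim E = 3%N.
Definition is_solid (S : {vspace V}) : Prop := \dim S = 4%N.

Definition is_flag23 (f : {vspace V} * {vspace V}) : Prop :=
  is_plane f.1 /\ is_solid f.2 /\ (f.1 <= f.2)%VS.

Definition kneser_adj (f g : {vspace V} * {vspace V}) : Prop :=
  f <> g /\ (f.1 :&: g.2 = 0)%VS /\ (g.1 :&: f.2 = 0)%VS.

Definition kneser_independent (A : {vspace V} * {vspace V} -> Prop) : Prop :=
  (forall f, A f -> is_flag23 f) /\
  (forall f g, A f -> A g -> ~ kneser_adj f g).

Definition kneser_chi_le (k : nat) : Prop :=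
  exists P : 'I_k -> ({vspace V} * {vspace V} -> Prop),
    (forall i, kneser_independent (P i)) /\
    (forall f, is_flag23 f -> exists i, P i f).
End Kneser.

From HB Require Import structures.
From mathcomp Require Import all_boot all_order all_algebra all_field.
From mathcomp Require Import ring zify.
Set Implicit Arguments. Unset Strict Implicit. Unset Printing Implicit Defensive.
Import GRing.Theory.
Local Open Scope ring_scope.

(* Fix a point P on a line l.  The flags (E, S) with P in E or l in S form an
   independent set: for two of them E meets S', either in P or because the
   plane E and the line l lie in the same solid S.  So it suffices to cover all
   flags by q^4 + q^3 + q^2 + 1 such point-line pairs.
   Let W = {x5 = x6 = 0}, a 4-space, and m = e0 e1, a line in W.  Take the pair
   (e0, m) and, for each point P = (s, t, w) of W off m, with w one of the
   q^2 + q + 1 normalised points of the plane <e2, e3, e4>, the pair (P, P Q_t)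
   where Q_t = (t, 1, 0, ..., 0) lies on m.
   A plane E meets W in some point u.  If u is off m, the pair of u serves.  If
   u = e0 or m lies in S, the pair (e0, m) serves.  Otherwise u = Q_a lies in S,
   and S meets W in a point y off m; moving y along the line y Q_a to the point
   with second coordinate a gives a P with P Q_a inside S. *)

Section VspaceDim.
Variables (K : fieldType) (vT : vectType K).
Implicit Types (U V : {vspace vT}) (x : vT).

Lemma capv_neq0 U V x : x \in U -> x \in V -> x != 0 -> (U :&: V != 0)%VS.
Proof.
move=> xU xV; apply: contra => /eqP UV0.
by rewrite -memv0 -UV0 memv_cap xU xV.
Qed.

Lemma capv_neq0_dim U1 U2 V : (U1 <= V)%VS -> (U2 <= V)%VS ->
  (\dim V < \dim U1 + \dim U2)%N -> (U1 :&: U2 != 0)%VS.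
Proof.
move=> sU1V sU2V; rewrite -dimv_sum_cap -dimv_eq0.
have : (\dim (U1 + U2) <= \dim V)%N by apply: dimvS; rewrite subv_add sU1V sU2V.
lia.
Qed.

Lemma dim_addv_line_ge2 x y : x != 0 -> y \notin <[x]>%VS ->
  (2 <= \dim (<[x]> + <[y]>))%N.
Proof.
move=> x0 yNx; have [le_xL eq_xL] := dimv_leqif_eq (addvSl <[x]> <[y]>).
rewrite dim_vline x0 in le_xL eq_xL; rewrite ltn_neqAle le_xL eq_xL andbT.
by apply: contra yNx => /eqP ->; rewrite memvE addvSr.
Qed.

Lemma dim_lker_ge (aT rT : vectType K) (f : 'Hom(aT, rT)) :
  (dim aT <= \dim (lker f) + dim rT)%N.
Proof.
have := limg_ker_dim f fullv; rewrite capfv dimvf => <-.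
by rewrite leq_add2l -dimvf dimvS ?subvf.
Qed.
End VspaceDim.

Lemma notin_vline_coord (F : fieldType) n (p x : 'rV[F]_n) i j :
  p 0 i = 1 -> x 0 i = 0 -> x 0 j != 0 -> x \notin <[p]>%VS.
Proof.
move=> pi1 xi0 xj0; apply/vlineP => -[k xkp].
have := congr1 (fun v : 'rV_n => v 0 i) xkp; rewrite /= mxE xi0 pi1 mulr1 => k0.
by rewrite xkp -k0 scale0r mxE eqxx in xj0.
Qed.

Section FlagKneserGraph.
Variables (F : fieldType) (n : nat).
Local Notation V := 'rV[F]_n.

Definition point_line_class (v : V) (L : {vspace V})
    (f : {vspace V} * {vspace V}) : Prop :=
  is_flag23 f /\ (v \in f.1 \/ (L <= f.2)%VS).

Lemma point_line_class_independent (v : V) (L : {vspace V}) :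
  v != 0 -> v \in L -> (2 <= \dim L)%N ->
  kneser_independent (point_line_class v L).
Proof.
move=> v0 vL dimL; split=> [f [] //|].
move=> [E S] [E' S'] [[/= dimE [dimS sES]] vES] [[/= _ [_ sES']] vES'].
move=> [_ [/= ES'0 E'S0]].
have vS X Y : (X <= Y)%VS -> v \in X \/ (L <= Y)%VS -> v \in Y.
  by move=> sXY [/(subvP sXY)|/subvP]; last apply.
case: vES => [vE|LS].
  by have := capv_neq0 vE (vS _ _ sES' vES') v0; rewrite ES'0 eqxx.
case: vES' => [vE'|LS'].
  by have := capv_neq0 vE' (vS _ _ sES (or_intror LS)) v0; rewrite E'S0 eqxx.
have : (E :&: L != 0)%VS.
  by apply: (capv_neq0_dim sES LS); rewrite dimE dimS; lia.
by rewrite -subv0 -ES'0 capvS.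
Qed.

Lemma kneser_chi_le_card (C : finType)
    (class : C -> {vspace V} * {vspace V} -> Prop) :
  (forall c, kneser_independent (class c)) ->
  (forall f, is_flag23 f -> exists c, class c f) ->
  kneser_chi_le F n #|C|.
Proof.
move=> class_indep class_cover; exists (fun i => class (enum_val i)).
split=> [i|f /class_cover[c fc]]; first exact: class_indep.
by exists (enum_rank c); rewrite enum_rankK.
Qed.
End FlagKneserGraph.

Section PG6.
Variable F : fieldType.
Local Notation V := 'rV[F]_7.

Definition vec7 (a0 a1 a2 a3 a4 a5 a6 : F) : V :=
  \row_(i < 7) nth 0 [:: a0; a1; a2; a3; a4; a5; a6] i.

Lemma vec7E (y : V) : y = vec7 (y 0 (inord 0)) (y 0 (inord 1)) (y 0 (inord 2))
  (y 0 (inord 3)) (y 0 (inord 4)) (y 0 (inord 5)) (y 0 (inord 6)).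
Proof.
apply/rowP => -[[|[|[|[|[|[|[|k]]]]]]] lt_i7] //; rewrite mxE /=;
  by congr (y 0 _); apply: val_inj; rewrite /= inordK.
Qed.

Lemma vec7D a0 a1 a2 a3 a4 a5 a6 b0 b1 b2 b3 b4 b5 b6 :
  vec7 a0 a1 a2 a3 a4 a5 a6 + vec7 b0 b1 b2 b3 b4 b5 b6 =
  vec7 (a0 + b0) (a1 + b1) (a2 + b2) (a3 + b3) (a4 + b4) (a5 + b5) (a6 + b6).
Proof. by apply/rowP => -[[|[|[|[|[|[|[|k]]]]]]] lt_i7] //; rewrite !mxE. Qed.

Lemma vec7Z c a0 a1 a2 a3 a4 a5 a6 :
  c *: vec7 a0 a1 a2 a3 a4 a5 a6 =
  vec7 (c * a0) (c * a1) (c * a2) (c * a3) (c * a4) (c * a5) (c * a6).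
Proof. by apply/rowP => -[[|[|[|[|[|[|[|k]]]]]]] lt_i7] //; rewrite !mxE. Qed.

Definition W : {vspace V} := lker (linfun (@rsubmx F 1 5 2)).

Lemma dimW : (5 <= \dim W)%N.
Proof.
have := dim_lker_ge (linfun (@rsubmx F 1 5 2)).
(* [lker] lives in {vspace 'rV_(5 + 2)}, so [lia] would not match it with W. *)
rewrite !dim_matrix !mul1r => dim_ker; rewrite -(leq_add2r 2); exact: dim_ker.
Qed.

Lemma memW (y : V) : y \in W ->
  exists a0 a1 a2 a3 a4, y = vec7 a0 a1 a2 a3 a4 0 0.
Proof.
rewrite memv_ker (lfunE (@rsubmx F 1 5 2)) /= => /eqP/rowP y56.
have y0 (j : 'I_2) : y 0 (inord (5 + j)) = 0.
  have := y56 j; rewrite !mxE => <-; congr (y 0 _).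
  by apply: val_inj; rewrite /= inordK //; have := ltn_ord j; lia.
exists (y 0 (inord 0)), (y 0 (inord 1)), (y 0 (inord 2)).
exists (y 0 (inord 3)), (y 0 (inord 4)).
by rewrite {1}[y]vec7E (y0 0) (y0 1).
Qed.

Definition e0 : V := vec7 1 0 0 0 0 0 0.
Definition e1 : V := vec7 0 1 0 0 0 0 0.
Definition m : {vspace V} := (<[e0]> + <[e1]>)%VS.

Lemma vec7_mem_m a b : vec7 a b 0 0 0 0 0 \in m.
Proof.
have -> : vec7 a b 0 0 0 0 0 = a *: e0 + b *: e1.
  by rewrite !vec7Z vec7D; congr vec7; ring.
by rewrite memv_add ?memvZ ?memv_line.
Qed.

Lemma dim_m : (\dim m <= 2)%N.
Proof.
rewrite (leq_trans (dimv_add_leqif _ _)) // !dim_vline.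
by case: (e0 != 0); case: (e1 != 0).
Qed.

Definition plane_pt : Type := (F * F + (F + unit))%type.

Definition plane_vec (w : plane_pt) : V :=
  match w with
  | inl (a, b) => vec7 0 0 1 a b 0 0
  | inr (inl a) => vec7 0 0 0 1 a 0 0
  | inr (inr _) => vec7 0 0 0 0 1 0 0
  end.

Definition affine_vec (s t : F) (w : plane_pt) : V :=
  vec7 s t 0 0 0 0 0 + plane_vec w.

Lemma W_normal_form (y : V) : y \in W -> y \notin m ->
  exists mu s t w, mu *: y = affine_vec s t w.
Proof.
move=> /memW[a0 [a1 [a2 [a3 [a4 ->]]]]] yNm.
suff [mu [w muw]] : exists mu w, mu *: vec7 0 0 a2 a3 a4 0 0 = plane_vec w.
  exists mu, (mu * a0), (mu * a1), w.
  by rewrite /affine_vec -muw !vec7Z vec7D; congr vec7; ring.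
have [a2_0|a2n0] := eqVneq a2 0; last first.
  by exists a2^-1, (inl (a2^-1 * a3, a2^-1 * a4)); rewrite vec7Z mulr0 mulVf.
have [a3_0|a3n0] := eqVneq a3 0; last first.
  by exists a3^-1, (inr (inl (a3^-1 * a4))); rewrite vec7Z a2_0 mulr0 mulVf.
have [a4_0|a4n0] := eqVneq a4 0; last first.
  by exists a4^-1, (inr (inr tt)); rewrite vec7Z a2_0 a3_0 mulr0 mulVf.
by move: yNm; rewrite a2_0 a3_0 a4_0 vec7_mem_m.
Qed.

Definition mpoint (t : F) : V := vec7 t 1 0 0 0 0 0.

Lemma affine_vec_shift s t w a :
  affine_vec s t w + (a - t) *: mpoint a = affine_vec (s + (a - t) * a) a w.
Proof.
by rewrite /affine_vec addrAC vec7Z vec7D; congr (vec7 _ _ _ _ _ _ _ + _); ring.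
Qed.

Lemma point_of_m (u : V) : u \in m -> u != 0 ->
  e0 \in <[u]>%VS \/ exists t, mpoint t \in <[u]>%VS.
Proof.
case/memv_addP => _ /vlineP[a ->] [_ /vlineP[b ->] ->] u0.
have [b0|b0] := eqVneq b 0.
  rewrite b0 scale0r addr0 in u0 *; left; apply/vlineP; exists a^-1.
  by rewrite scalerK //; apply: contraNneq u0 => ->; rewrite scale0r.
right; exists (b^-1 * a); apply/vlineP; exists b^-1.
rewrite scalerDr !scalerA !vec7Z vec7D mulr1 mulVf //.
by rewrite /mpoint; congr vec7; ring.
Qed.

Definition color : Type := option (F * F * plane_pt).

Definition color_point (c : color) : V :=
  if c is Some (s, t, w) then affine_vec s t w else e0.

Definition color_dir (c : color) : V :=
  if c is Some (_, t, _) then mpoint t else e1.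

Definition color_line (c : color) : {vspace V} :=
  (<[color_point c]> + <[color_dir c]>)%VS.

Definition color_class (c : color) :=
  point_line_class (color_point c) (color_line c).

Lemma color_point_dir c :
  color_point c != 0 /\ color_dir c \notin <[color_point c]>%VS.
Proof.
have [i [pi1 di0]] : exists i, color_point c 0 i = 1 /\ color_dir c 0 i = 0.
  case: c => [[[s t] [[a b]|[a|[]]]]|];
    [exists (inord 2) | exists (inord 3) | exists (inord 4) | exists (inord 0)];
    by rewrite /= ?vec7D !mxE inordK //= ?add0r.
have dj : color_dir c 0 (inord 1) != 0.
  by case: c {i pi1 di0} => [[[s t] w]|]; rewrite /= mxE inordK //= oner_neq0.
split; last exact: notin_vline_coord pi1 di0 dj.
by apply/eqP => p0; move: pi1; rewrite p0 mxE => /esym/eqP; rewrite oner_eq0.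
Qed.

Lemma color_class_independent c : kneser_independent (color_class c).
Proof.
have [p0 dNp] := color_point_dir c.
apply: point_line_class_independent p0 _ (dim_addv_line_ge2 p0 dNp).
by rewrite memvE addvSl.
Qed.

Lemma solid_meets_W_off_m (S : {vspace V}) : is_solid S -> ~~ (m <= S)%VS ->
  exists2 y, y \in (S :&: W)%VS & y \notin m.
Proof.
move=> dimS mNS; apply/subvPn; apply: contra mNS => sSWm.
have dimSW : (2 <= \dim (S :&: W))%N.
  have := dimv_sum_cap S W; have := dimvS (subvf (S + W)).
  by rewrite dimvf dim_matrix mul1r dimS; have := dimW; lia.
suff <- : (S :&: W)%VS = m by apply: capvSl.
by apply/eqP; rewrite eqEdim sSWm (leq_trans dim_m dimSW).
Qed.

Lemma plane_meets_W (E : {vspace V}) : is_plane E ->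
  exists2 u, u \in (E :&: W)%VS & u != 0.
Proof.
move=> dimE; exists (vpick (E :&: W)); first exact: memv_pick.
rewrite vpick0; apply: (capv_neq0_dim (subvf E) (subvf W)).
by rewrite dimvf dim_matrix mul1r dimE; have := dimW; lia.
Qed.

Lemma color_line_through_m (S : {vspace V}) y t :
  y \in S -> y \in W -> y \notin m -> mpoint t \in S ->
  exists c, (color_line c <= S)%VS.
Proof.
move=> yS yW yNm xS; have [mu [s [t' [w muy]]]] := W_normal_form yW yNm.
exists (Some (s + (t - t') * t, t, w)).
rewrite /color_line /= subv_add -!memvE -affine_vec_shift -muy xS andbT.
by rewrite memvD ?memvZ.
Qed.

Lemma color_class_cover f : is_flag23 f -> exists c, color_class c f.
Proof.
case: f => E S flagES; have [/= dimE [dimS sES]] := flagES.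
suff [c Hc] : exists c, color_point c \in E \/ (color_line c <= S)%VS.
  by exists c.
have [mS|mNS] := boolP (m <= S)%VS; first by exists None; right.
have [y /[1!memv_cap] /andP[yS yW] yNm] := solid_meets_W_off_m dimS mNS.
have [u /[1!memv_cap] /andP[uE uW] u0] := plane_meets_W dimE.
have [um|uNm] := boolP (u \in m); last first.
  have [mu [s [t [w muu]]]] := W_normal_form uW uNm.
  by exists (Some (s, t, w)); left; rewrite /= -muu memvZ.
rewrite memvE in uE; have [e0u|[t xu]] := point_of_m um u0.
  by exists None; left; apply: (subvP uE).
have [c] := color_line_through_m yS yW yNm (subvP (subv_trans uE sES) _ xu).
by exists c; right.
Qed.

End PG6.

Lemma card_color (F : finFieldType) :
  #|{: color F}| = (#|F| ^ 4 + #|F| ^ 3 + #|F| ^ 2 + 1)%N.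
Proof.
rewrite card_option !card_prod !card_sum card_prod card_unit.
by move: #|F| => q; rewrite !expnS expn0; ring.
Qed.

Theorem proposition7p2 (F : finFieldType) :
  kneser_chi_le F 7
    (#|F| ^ 4 + #|F| ^ 3 + #|F| ^ 2 + 1)%N.
Proof.
rewrite -card_color.
exact: kneser_chi_le_card (@color_class_independent F) (@color_class_cover F).
Qed.
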